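(* Let $n\ge1$ and $1\le k\le n$. Let $\alpha_k$ be the number of pairs $(P,i)$ where $P=(a_0,a_1,\dots,a_{2n})$ is a Dyck path of length $2n$ (i.e., $a_0=a_{2n}=0$, $a_j\ge0$ and $|a_j-a_{j-1}|=1$ for all $j$) and $0\le i\le 2n-1$ is an index with $a_i=k$ and $a_{i+1}=k-1$. Then \[ \alpha_k=\binom{2n}{n-k}-\binom{2n}{n-k-1}, \] with the convention $\binom{2n}{-1}=0$. *)

From mathcomp Require Import all_boot all_order all_algebra.
Set Implicit Arguments. Unset Strict Implicit. Unset Printing Implicit Defensive.

(* Heights of a Dyck path are automatically <= 2n, so no generality is lost.
   Heights are natural numbers, so a_j >= 0 holds by typing. *)
Definition path_ty (n : nat) := {ffun 'I_(2 * n).+1 -> 'I_(2 * n).+1}.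

(* value of the path at position j (0 if j is out of range; never used there) *)
Definition hgt n (a : path_ty n) (j : nat) : nat :=
  match insub j with Some j' => nat_of_ord (a j') | None => 0 end.

Definition is_dyck n (a : path_ty n) : bool :=
  [&& hgt a 0 == 0, hgt a (2 * n) == 0 &
      [forall j : 'I_(2 * n), (hgt a j.+1 == (hgt a j).+1) || (hgt a j == (hgt a j.+1).+1)]].

Definition alpha (n k : nat) : nat :=
  #|[set Pi : path_ty n * 'I_(2 * n) |
      [&& is_dyck Pi.1, hgt Pi.1 Pi.2 == k & hgt Pi.1 Pi.2.+1 == k.-1]]|.

Definition binomZ (m : nat) (j : int) : int :=
  match j with Posz j' => ('C(m, j'))%:Z | Negz _ => 0 end.

(* Let W(m, d) be the number of walks with m steps +-1 and displacement d, so
   that W(m, m - 2j) = C(m, j).  By the reflection principle, the nonnegative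
   walks of length m from height h down to 0 number W(m, h) - W(m, h + 2), and
   summing over them the number of descents k -> k-1 gives
   W(m, max(h, 2k - h)) - W(m, 2k + h + 2).  Both formulas are proved by
   induction on m, splitting off the first step; a first step h -> h - 1 with
   h = k contributes one descent for each walk counted by the first formula.
   For h = 0 and m = 2n this is W(2n, 2k) - W(2n, 2k + 2), i.e. the claimed
   difference of binomial coefficients. *)

From mathcomp Require Import all_boot all_order all_algebra.
From mathcomp Require Import zify ring.
Import GRing.Theory.

Set Implicit Arguments.
Unset Strict Implicit.
Unset Printing Implicit Defensive.

Fixpoint nwalks (m : nat) (d : int) : nat :=
  if m is m'.+1 then nwalks m' (d - 1)%R + nwalks m' (d + 1)%R else (d == 0%R).

Lemma nwalksN m d : nwalks m (- d)%R = nwalks m d.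
Proof.
elim: m d => [|m IH] d /=; first by rewrite oppr_eq0.
have -> : (- d - 1 = - (d + 1))%R by ring.
have -> : (- d + 1 = - (d - 1))%R by ring.
by rewrite !IH addnC.
Qed.

Lemma nwalks_gt m d : (m%:Z < d)%R -> nwalks m d = 0.
Proof.
elim: m d => [|m IH] d /= lt_md; first by apply/eqP; lia.
by rewrite !IH //; lia.
Qed.

Lemma nwalks_bin m j : nwalks m (m%:Z - 2 * j%:Z)%R = 'C(m, j).
Proof.
elim: m j => [|m IH] [|j] //=.
  have -> : (m.+1%:Z - 2 * 0%:Z - 1 = m%:Z - 2 * 0%:Z)%R by lia.
  by rewrite IH nwalks_gt ?bin0 //; lia.
have -> : (m.+1%:Z - 2 * j.+1%:Z - 1 = m%:Z - 2 * j.+1%:Z)%R by lia.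
have -> : (m.+1%:Z - 2 * j.+1%:Z + 1 = m%:Z - 2 * j%:Z)%R by lia.
by rewrite !IH binS addnC.
Qed.

Lemma nwalksSS m d : nwalks m.+1 d.+1 = nwalks m d + nwalks m d.+2.
Proof. by rewrite /=; congr (nwalks m _ + nwalks m _); lia. Qed.

Definition unit_step : rel nat := fun x y => (y == x.+1) || (x == y.+1).

Fixpoint walks (m h : nat) : seq (seq nat) :=
  if m is m'.+1 then
    [seq h.+1 :: t | t <- walks m' h.+1] ++
    (if h is h'.+1 then [seq h' :: t | t <- walks m' h'] else [::])
  else [:: [::]].

Lemma mem_map_cons (T : eqType) (y x : T) s L :
  (x :: s \in [seq y :: t | t <- L]) = (x == y) && (s \in L).
Proof.
apply/mapP/andP => [[t Lt [-> ->]]|[/eqP -> Ls]]; first by rewrite eqxx.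
by exists s.
Qed.

Lemma nil_map_cons (T : eqType) (y : T) L : ([::] \in [seq y :: t | t <- L]) = false.
Proof. by apply/mapP => -[]. Qed.

Lemma mem_walks m h t : (t \in walks m h) = (size t == m) && path unit_step h t.
Proof.
elim: m h t => [|m IH] h [|x t] //=; rewrite mem_cat.
  by case: h => [|h]; rewrite /= !nil_map_cons.
rewrite eqSS mem_map_cons IH [unit_step h x]/unit_step.
case: h => [|h] /=; rewrite ?in_nil ?mem_map_cons ?IH ?eqSS ?orbF.
  by case: (x =P 1) => [->|_] //=; rewrite andbF.
rewrite [h == x]eq_sym; case: (x =P h.+2) => [->|_].
  by rewrite (_ : h.+2 == h = false) ?andbF ?orbF //; lia.
by case: (x =P h) => [->|] //=; rewrite andbF.
Qed.

Lemma uniq_walks m h : uniq (walks m h).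
Proof.
elim: m h => [|m IH] h //=.
rewrite cat_uniq map_inj_uniq ?IH; last by move=> s t [].
case: h => [|h] //=.
rewrite map_inj_uniq ?IH ?andbT; last by move=> s t [].
by apply/hasPn => _ /mapP [t _ ->]; rewrite mem_map_cons; lia.
Qed.

Fixpoint ndown (k p : nat) (t : seq nat) : nat :=
  if t is x :: t' then ((p == k) && (x == k.-1)) + ndown k x t' else 0.

Lemma ndown_nth k p t :
  ndown k p t = \sum_(i < size t) ((nth 0 (p :: t) i == k) && (nth 0 (p :: t) i.+1 == k.-1)).
Proof.
by elim: t p => [|x t IH] p /=; rewrite ?big_ord0 // big_ord_recl IH.
Qed.

Definition nexcursions m h := \sum_(t <- walks m h | last h t == 0) 1.

Definition ndown_excursions k m h := \sum_(t <- walks m h | last h t == 0) ndown k h t.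

Lemma nexcursions0 h : nexcursions 0 h = (h == 0).
Proof. by rewrite /nexcursions big_mkcond big_seq1; case: (h == 0). Qed.

Lemma nexcursionsS m h :
  nexcursions m.+1 h = nexcursions m h.+1 + (if h is h'.+1 then nexcursions m h' else 0).
Proof. by rewrite /nexcursions big_cat big_map; case: h => [|h]; rewrite ?big_nil ?big_map. Qed.

Lemma ndown_excursions0 k h : ndown_excursions k 0 h = 0.
Proof. by rewrite /ndown_excursions big_mkcond big_seq1 if_same. Qed.

Lemma ndown_excursionsS k m h : 0 < k ->
  ndown_excursions k m.+1 h = ndown_excursions k m h.+1 +
    (if h is h'.+1 then ndown_excursions k m h' + (h == k) * nexcursions m h' else 0).
Proof.
move=> k_gt0; rewrite /ndown_excursions big_cat big_map /=; congr (_ + _).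
  by apply: eq_bigr => t _; rewrite (_ : (h == k) && _ = false) //; lia.
case: h => [|h]; rewrite ?big_nil // big_map /= /nexcursions big_distrr -big_split /=.
apply: eq_bigr => t _; rewrite addnC muln1; congr (_ + _).
by case: (h.+1 =P k) => [<-|]; rewrite ?eqxx.
Qed.

Lemma nexcursions_reflection m h :
  ((nexcursions m h)%:Z = (nwalks m h)%:Z - (nwalks m h.+2)%:Z)%R.
Proof.
elim: m h => [|m IH] h; first by rewrite nexcursions0; case: h.
rewrite nexcursionsS nwalksSS; case: h => [|h]; last by rewrite nwalksSS !PoszD IH IH; ring.
have -> : (nwalks m.+1 0 = nwalks m 1%N + nwalks m 1%N)%N by rewrite /= sub0r nwalksN.
rewrite addn0 IH; lia.
Qed.

Lemma ndown_excursions_reflection k m h : 0 < k ->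
  ((ndown_excursions k m h)%:Z =
    (nwalks m (maxn h (2 * k - h))%N)%:Z - (nwalks m ((2 * k + h).+2)%N)%:Z)%R.
Proof.
move=> k_gt0; elim: m h => [|m IH] h.
  by rewrite ndown_excursions0 !nwalks_gt //; lia.
rewrite ndown_excursionsS //; case: h => [|h].
  rewrite !addn0 IH.
  have -> : maxn 0 (2 * k - 0) = (2 * k - 1).+1 by lia.
  have -> : maxn 1 (2 * k - 1) = 2 * k - 1 by lia.
  have -> : (2 * k + 1).+2 = (2 * k - 1).+4 by lia.
  have -> : (2 * k).+2 = (2 * k - 1).+3 by lia.
  by rewrite !nwalksSS; lia.
rewrite addnS nwalksSS [LHS]PoszD [in LHS]PoszD PoszM !IH nexcursions_reflection !addnS.
case: (ltngtP h.+1 k) => [lt_hk|lt_kh|<-].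
- have -> : maxn h.+1 (2 * k - h.+1) = (2 * k - h.+2).+1 by lia.
  have -> : maxn h.+2 (2 * k - h.+2) = 2 * k - h.+2 by lia.
  have -> : maxn h (2 * k - h) = (2 * k - h.+2).+2 by lia.
  by rewrite nwalksSS; lia.
- have -> : maxn h.+1 (2 * k - h.+1) = h.+1 by lia.
  have -> : maxn h.+2 (2 * k - h.+2) = h.+2 by lia.
  have -> : maxn h (2 * k - h) = h by lia.
  by rewrite nwalksSS; lia.
- have -> : maxn h.+1 (2 * h.+1 - h.+1) = h.+1 by lia.
  have -> : maxn h.+2 (2 * h.+1 - h.+2) = h.+2 by lia.
  have -> : maxn h (2 * h.+1 - h) = h.+2 by lia.
  by rewrite nwalksSS; lia.
Qed.

Lemma hgtE n (P : path_ty n) j (lt_j : j < (2 * n).+1) : hgt P j = P (Ordinal lt_j).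
Proof.
rewrite /hgt; case: insubP => [j' _ j'E|/negP //].
by congr (nat_of_ord (P _)); apply: val_inj.
Qed.

Lemma hgt_ord n (P : path_ty n) (j : 'I_(2 * n).+1) : hgt P j = P j.
Proof. by rewrite (hgtE P (ltn_ord j)); congr (nat_of_ord (P _)); apply: val_inj. Qed.

Definition heights n (P : path_ty n) := [seq hgt P j | j <- iota 1 (2 * n)].

Lemma size_heights n (P : path_ty n) : size (heights P) = 2 * n.
Proof. by rewrite size_map size_iota. Qed.

Lemma nth_heights n (P : path_ty n) i : i < 2 * n -> nth 0 (heights P) i = hgt P i.+1.
Proof. by move=> lt_i; rewrite (nth_map 0) ?size_iota // nth_iota // add1n. Qed.

Lemma nth_dyck_heights n (P : path_ty n) i :
  is_dyck P -> i <= 2 * n -> nth 0 (0 :: heights P) i = hgt P i.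
Proof.
by case/and3P=> /eqP P0 _ _; case: i => [|i] lt_i //=; rewrite nth_heights.
Qed.

Lemma dyck_heights_excursion n (P : path_ty n) :
  is_dyck P -> (heights P \in walks (2 * n) 0) && (last 0 (heights P) == 0).
Proof.
move=> dyckP; have [_ /eqP Pend /forallP Psteps] := and3P dyckP.
rewrite mem_walks size_heights eqxx (last_nth 0) size_heights nth_dyck_heights // Pend.
rewrite andbT; apply/(pathP 0) => i; rewrite size_heights => lt_i.
by rewrite nth_dyck_heights ?(ltnW lt_i) // nth_heights //; apply: (Psteps (Ordinal lt_i)).
Qed.

Lemma walk_nth_le h t i : path unit_step h t -> nth 0 (h :: t) i <= h + i.
Proof.
elim: t h i => [|x t IH] h [|i] //=; rewrite ?nth_nil ?addn0 // => /andP [step_hx walk_t].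
by have := IH x i walk_t; move: step_hx => /orP [] /eqP ->; lia.
Qed.

Lemma excursion_dyck_heights n t : t \in walks (2 * n) 0 -> last 0 t == 0 ->
  exists2 P : path_ty n, is_dyck P & heights P = t.
Proof.
rewrite mem_walks => /andP [/eqP size_t walk_t] end_t.
pose P : path_ty n := [ffun j : 'I_(2 * n).+1 => inord (nth 0 (0 :: t) j)].
have hgtP j : j <= 2 * n -> hgt P j = nth 0 (0 :: t) j.
  move=> le_j; rewrite (hgtE P (le_j : j < (2 * n).+1)) ffunE inordK //.
  by rewrite ltnS (leq_trans (walk_nth_le j walk_t)).
exists P.
  apply/and3P; split; first by rewrite hgtP.
    by rewrite hgtP // -size_t -(last_nth 0).
  apply/forallP => j; rewrite !hgtP ?(ltnW (ltn_ord j)) ?ltn_ord //.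
  by apply: (pathP 0 walk_t); rewrite size_t.
apply: (@eq_from_nth _ 0); rewrite size_heights ?size_t // => i lt_i.
by rewrite nth_heights // hgtP.
Qed.

Lemma dyck_heights_inj n (P Q : path_ty n) :
  is_dyck P -> is_dyck Q -> heights P = heights Q -> P = Q.
Proof.
move=> dyckP dyckQ eqPQ; apply/ffunP => j; apply: val_inj => /=.
by rewrite -!hgt_ord -!nth_dyck_heights ?eqPQ // -ltnS.
Qed.

Lemma sum_dyck_heights n (F : seq nat -> nat) :
  \sum_(P : path_ty n | is_dyck P) F (heights P) =
  \sum_(t <- walks (2 * n) 0 | last 0 t == 0) F t.
Proof.
transitivity (\sum_(t <- [seq heights P | P <- index_enum (path_ty n) & is_dyck P]) F t).
  by rewrite big_map big_filter.
rewrite -[RHS]big_filter; apply: perm_big; apply: uniq_perm.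
- rewrite map_inj_in_uniq ?filter_uniq ?index_enum_uniq // => P Q.
  by rewrite !mem_filter => /andP [dyckP _] /andP [dyckQ _]; apply: dyck_heights_inj.
- by rewrite filter_uniq ?uniq_walks.
move=> t; rewrite mem_filter andbC; apply/mapP/idP.
  by case=> P; rewrite mem_filter => /andP [/dyck_heights_excursion ? _] ->.
case/andP=> walk_t end_t; have [P dyckP <-] := excursion_dyck_heights walk_t end_t.
by exists P; rewrite // mem_filter dyckP mem_index_enum.
Qed.

Lemma alpha_ndown_excursions n k : alpha n k = ndown_excursions k (2 * n) 0.
Proof.
rewrite /ndown_excursions -sum_dyck_heights.
rewrite (eq_bigr (fun P => \sum_(i < 2 * n | (hgt P i == k) && (hgt P i.+1 == k.-1)) 1)).
  by rewrite pair_big_dep /alpha -sum1_card; apply: eq_bigl => Pi; rewrite inE.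
move=> P dyckP; rewrite ndown_nth size_heights [RHS]big_mkcond; apply: eq_bigr => i _.
by rewrite !nth_dyck_heights // ltnW.
Qed.

Local Open Scope ring_scope.

Theorem mainTheorem12 (n k : nat) (hn : (1 <= n)%N) (hk1 : (1 <= k)%N) (hkn : (k <= n)%N) :
  (alpha n k)%:Z = binomZ (2 * n) (n%:Z - k%:Z) - binomZ (2 * n) (n%:Z - k%:Z - 1).
Proof.
rewrite alpha_ndown_excursions ndown_excursions_reflection // max0n subn0 addn0.
have -> : n%:Z - k%:Z = (n - k)%N by lia.
have -> : Posz (2 * k) = (2 * n)%N%:Z - 2 * (n - k)%N%:Z by lia.
rewrite nwalks_bin; case: (ltnP k n) => [lt_kn|le_nk].
  have -> : (n - k)%N%:Z - 1 = (n - k.+1)%N by lia.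
  have -> : Posz (2 * k).+2 = (2 * n)%N%:Z - 2 * (n - k.+1)%N%:Z by lia.
  by rewrite nwalks_bin.
rewrite (_ : n - k = 0)%N ?nwalks_gt //; lia.
Qed.
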